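(* Under the standing assumptions, if $a<0$ then $z(\theta)$ is negative and strictly increasing on $(\pi/2,\pi)$.
   Context: Standing assumptions: $a,b\in\mathbb{R}$ with $b>0$, $1+a+b>0$, $9-27a+b>0$, $2-8a+8a^2+ab\ne0$, $b+1-a\ne0$. Let $f^*(\zeta,\theta)=(\zeta+2\cos\theta)(2\zeta\cos\theta+1)+b\zeta-a(\zeta+2\cos\theta)^3$. Under these assumptions, for each $\theta\in(\pi/2,\pi)$ the polynomial $f^*(\cdot,\theta)$ has exactly one real zero in $(-1,1)$; denote it $w(\theta)$ (so $\zeta(\theta)=1/w(\theta)$). Define $\tau(\theta)=-w(\theta)-2\cos\theta$ and $z(\theta)=-\dfrac{w(\theta)}{\tau(\theta)^3}$ (i.e. $z=-1/(\zeta\tau^3)$). *)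

From Stdlib Require Import Reals Lra.
Open Scope R_scope.

Definition fstar (a b zeta theta : R) : R :=
  (zeta + 2 * cos theta) * (2 * zeta * cos theta + 1) + b * zeta
  - a * (zeta + 2 * cos theta) ^ 3.

Definition standing (a b : R) : Prop :=
  b > 0 /\ 1 + a + b > 0 /\ 9 - 27 * a + b > 0 /\
  2 - 8 * a + 8 * a ^ 2 + a * b <> 0 /\ b + 1 - a <> 0.

Definition tau_of (w : R -> R) (theta : R) : R := - w theta - 2 * cos theta.

Definition z_of (w : R -> R) (theta : R) : R := - w theta / (tau_of w theta) ^ 3.

(* Write tau = -w - 2 cos theta. Then f^* vanishes exactly when
   ftau(tau, w) = tau w^2 + (tau^2 + b) w + a tau^3 - tau = 0, and on (pi/2, pi)
   the root has 0 < w and 0 < tau, so z = -w / tau^3 < 0.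
   Along the curve ftau = 0 the sum w + tau = -2 cos theta increases with tau,
   so tau increases with theta. In the variables z and u = tau^2 the equation
   becomes fzu(z, u) = 0, where fzu is decreasing in z and fzu(z, u) / u is
   increasing in u; hence z increases with tau. *)
From Stdlib Require Import Reals Lra Psatz.
Open Scope R_scope.

Definition ftau (a b t w : R) : R := t * w ^ 2 + (t ^ 2 + b) * w + a * t ^ 3 - t.

Definition fzu (a b z u : R) : R := z ^ 2 * u ^ 3 - z * u ^ 2 + (a - b * z) * u - 1.

Lemma fstar_ftau (a b w theta : R) :
  fstar a b w theta = ftau a b (- w - 2 * cos theta) w.
Proof. unfold fstar, ftau. ring. Qed.

Lemma ftau_fzu (a b z t : R) : ftau a b t (- z * t ^ 3) = t * fzu a b z (t ^ 2).
Proof. unfold ftau, fzu. ring. Qed.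

Lemma cos_open_second_quadrant (t : R) : PI / 2 < t < PI -> -1 < cos t < 0.
Proof.
  intros [h1 h2]; pose proof PI_RGT_0. split.
  - rewrite <- cos_PI. apply cos_decreasing_1; lra.
  - apply cos_lt_0; lra.
Qed.

Section RootCurve.

Variables a b : R.
Hypothesis a_neg : a < 0.
Hypothesis b_pos : 0 < b.

Lemma ftau_root_pos (t w : R) :
  0 < w + t -> w < 1 -> ftau a b t w = 0 -> 0 < w /\ 0 < t.
Proof.
  intros s_pos w_lt1 root.
  assert (split_eq : ftau a b t w = t * (w * (w + t) - 1 + a * t ^ 2) + b * w)
    by (unfold ftau; ring).
  assert (at2 : a * t ^ 2 <= 0) by nra.
  assert (w_pos : 0 < w).
  { destruct (Rle_lt_dec w 0) as [w_np | ]; [exfalso | assumption].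
    assert (w * (w + t) <= 0) by nra. nra. }
  split; [exact w_pos|].
  destruct (Rle_lt_dec t 0) as [t_np | ]; [exfalso | assumption].
  assert (w * (w + t) < 1) by nra. nra.
Qed.

Lemma ftau_increasing_in_w (t w1 w2 : R) :
  0 < t -> 0 <= w1 < w2 -> ftau a b t w1 < ftau a b t w2.
Proof.
  intros t_pos w12.
  assert (ftau a b t w2 - ftau a b t w1 = (w2 - w1) * (t * (w1 + w2) + t ^ 2 + b))
    by (unfold ftau; ring).
  assert (0 < t * (w1 + w2) + t ^ 2 + b) by nra.
  nra.
Qed.

Lemma ftau_same_sum_diff (s t1 t2 : R) :
  ftau a b t1 (s - t1) - ftau a b t2 (s - t2) =
  (t1 - t2) * (a * (t1 ^ 2 + t1 * t2 + t2 ^ 2) + (s - t1) * (s - t2) - t1 * t2 - 1 - b).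
Proof. unfold ftau. ring. Qed.

Lemma root_sum_monotone (t1 t2 w1 w2 : R) :
  0 < t2 <= t1 -> 0 < w1 -> 0 < w2 < 1 ->
  ftau a b t1 w1 = 0 -> ftau a b t2 w2 = 0 -> w2 + t2 <= w1 + t1.
Proof.
  intros t12 w1_pos w2_bd root1 root2.
  destruct (Rle_lt_dec (w2 + t2) (w1 + t1)) as [ | lt_sum]; [assumption | exfalso].
  set (s := w2 + t2) in *.
  assert (w2_eq : s - t2 = w2) by (unfold s; ring).
  assert (above : ftau a b t1 w1 < ftau a b t1 (s - t1))
    by (apply ftau_increasing_in_w; lra).
  assert (bracket_neg :
    a * (t1 ^ 2 + t1 * t2 + t2 ^ 2) + (s - t1) * w2 - t1 * t2 - 1 - b < 0).
  { assert ((s - t1) * w2 < 1) by nra.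
    assert (0 < t1 ^ 2 + t1 * t2 + t2 ^ 2) by nra.
    nra. }
  pose proof (ftau_same_sum_diff s t1 t2) as diff.
  rewrite w2_eq, root2 in diff.
  assert ((t1 - t2) * (a * (t1 ^ 2 + t1 * t2 + t2 ^ 2) + (s - t1) * w2
                       - t1 * t2 - 1 - b) <= (t1 - t2) * 0)
    by (apply Rmult_le_compat_l; lra).
  lra.
Qed.

Lemma fzu_decreasing_in_z (z1 z2 u : R) :
  z2 <= z1 < 0 -> 0 < u -> fzu a b z1 u <= fzu a b z2 u.
Proof.
  intros z12 u_pos.
  assert (fzu a b z2 u - fzu a b z1 u = (z2 - z1) * ((z1 + z2) * u ^ 3 - u ^ 2 - b * u))
    by (unfold fzu; ring).
  assert (0 < u ^ 3) by (apply pow_lt; lra).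
  assert ((z1 + z2) * u ^ 3 - u ^ 2 - b * u < 0) by nra.
  nra.
Qed.

(* That is, fzu z u / u increases with u. *)
Lemma fzu_div_increasing_in_u (z u1 u2 : R) :
  z < 0 -> 0 < u1 < u2 -> u2 * fzu a b z u1 < u1 * fzu a b z u2.
Proof.
  intros z_neg u12.
  assert (u2 * fzu a b z u1 - u1 * fzu a b z u2 =
          (u1 - u2) * (z ^ 2 * u1 * u2 * (u1 + u2) - z * u1 * u2 + 1))
    by (unfold fzu; ring).
  assert (0 <= z ^ 2 * u1 * u2 * (u1 + u2)).
  { pose proof (pow2_ge_0 z). apply Rmult_le_pos; [apply Rmult_le_pos|]; nra. }
  assert (0 < - z * u1 * u2)
    by (apply Rmult_lt_0_compat; [apply Rmult_lt_0_compat|]; lra).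
  nra.
Qed.

Lemma z_increasing_in_tau (t1 t2 w1 w2 : R) :
  0 < t1 < t2 -> 0 < w1 -> 0 < w2 ->
  ftau a b t1 w1 = 0 -> ftau a b t2 w2 = 0 ->
  - w1 / t1 ^ 3 < - w2 / t2 ^ 3.
Proof.
  intros t12 w1_pos w2_pos root1 root2.
  assert (cube1 : 0 < t1 ^ 3) by (apply pow_lt; lra).
  assert (cube2 : 0 < t2 ^ 3) by (apply pow_lt; lra).
  set (z1 := - w1 / t1 ^ 3). set (z2 := - w2 / t2 ^ 3).
  assert (z1_neg : z1 < 0) by (unfold z1, Rdiv; apply Rinv_0_lt_compat in cube1; nra).
  assert (z2_neg : z2 < 0) by (unfold z2, Rdiv; apply Rinv_0_lt_compat in cube2; nra).
  assert (fzu1 : fzu a b z1 (t1 ^ 2) = 0).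
  { replace w1 with (- z1 * t1 ^ 3) in root1 by (unfold z1; field; lra).
    rewrite ftau_fzu in root1. nra. }
  assert (fzu2 : fzu a b z2 (t2 ^ 2) = 0).
  { replace w2 with (- z2 * t2 ^ 3) in root2 by (unfold z2; field; lra).
    rewrite ftau_fzu in root2. nra. }
  destruct (Rlt_le_dec z1 z2) as [ | z21]; [assumption | exfalso].
  assert (u12 : 0 < t1 ^ 2 < t2 ^ 2) by (split; nra).
  pose proof (fzu_decreasing_in_z z1 z2 (t1 ^ 2) (conj z21 z1_neg) (proj1 u12)).
  pose proof (fzu_div_increasing_in_u z2 _ _ z2_neg u12).
  nra.
Qed.

Variable w : R -> R.
Hypothesis w_root : forall theta, PI / 2 < theta < PI ->
  -1 < w theta < 1 /\ fstar a b (w theta) theta = 0.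

Lemma root_curve_point (theta : R) : PI / 2 < theta < PI ->
  0 < w theta < 1 /\ 0 < tau_of w theta /\ ftau a b (tau_of w theta) (w theta) = 0.
Proof.
  intros th.
  destruct (w_root theta th) as [w_bd root].
  pose proof (cos_open_second_quadrant theta th).
  rewrite fstar_ftau in root. unfold tau_of in *.
  destruct (ftau_root_pos (- w theta - 2 * cos theta) (w theta)); [lra | lra | exact root |].
  repeat split; lra || exact root.
Qed.

Lemma tau_increasing (t1 t2 : R) :
  PI / 2 < t1 < PI -> PI / 2 < t2 < PI -> t1 < t2 -> tau_of w t1 < tau_of w t2.
Proof.
  intros th1 th2 t12.
  destruct (root_curve_point t1 th1) as (w1_bd & tau1_pos & root1).
  destruct (root_curve_point t2 th2) as (w2_bd & tau2_pos & root2).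
  assert (cos t2 < cos t1) by (pose proof PI_RGT_0; apply cos_decreasing_1; lra).
  destruct (Rlt_le_dec (tau_of w t1) (tau_of w t2)) as [ | tau21]; [assumption | exfalso].
  pose proof (root_sum_monotone _ _ _ _ (conj tau2_pos tau21) (proj1 w1_bd) w2_bd root1 root2).
  unfold tau_of in *. lra.
Qed.

End RootCurve.

Theorem mainTheorem14 (a b : R) (w : R -> R) :
  standing a b ->
  (forall theta, PI / 2 < theta < PI ->
     -1 < w theta < 1 /\ fstar a b (w theta) theta = 0) ->
  a < 0 ->
  (forall theta, PI / 2 < theta < PI -> z_of w theta < 0) /\
  (forall t1 t2, PI / 2 < t1 < PI -> PI / 2 < t2 < PI -> t1 < t2 ->
     z_of w t1 < z_of w t2).
Proof.
  intros [b_pos _] w_root a_neg. split.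
  - intros theta th.
    destruct (root_curve_point a b a_neg b_pos w w_root theta th) as (w_bd & tau_pos & _).
    assert (0 < / tau_of w theta ^ 3) by (apply Rinv_0_lt_compat, pow_lt; lra).
    unfold z_of, Rdiv. nra.
  - intros t1 t2 th1 th2 t12.
    destruct (root_curve_point a b a_neg b_pos w w_root t1 th1) as (w1_bd & tau1_pos & root1).
    destruct (root_curve_point a b a_neg b_pos w w_root t2 th2) as (w2_bd & _ & root2).
    apply (z_increasing_in_tau a b b_pos _ _ _ _
             (conj tau1_pos (tau_increasing a b a_neg b_pos w w_root t1 t2 th1 th2 t12))
             (proj1 w1_bd) (proj1 w2_bd) root1 root2).
Qed.
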